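(* Consider the one-dimensional obstacle problem $\min(v_t + \mathcal{A} v, v-\varphi(t,x)) = f(t,x)$ on $(0,T)\times(X_{\min},X_{\max})$ with $\mathcal{A} v = -a(t,x) v_{xx} + b(t,x) v_x + r(t,x) v$, $a=\frac12\sigma^2$, under the assumptions: $a$, $b$, $r$ bounded; there is $\eta_0>0$ with $a(t,x)\geq \eta_0$ for all $(t,x)$; and $a$ is Lipschitz continuous in $x$ uniformly in $t$. Use the uniform grid $x_j = X_{\min}+jh$, $j=0,\dots,J+1$, $h=(X_{\max}-X_{\min})/(J+1)$, time step $\tau=T/N$, $t_n=n\tau$, and let $A$ be the $J\times J$ centered finite-difference matrix $A=\frac{1}{h^2}\mathrm{tridiag}(-a_i,\,2a_i,\,-a_i)+\frac{1}{2h}\mathrm{tridiag}(-b_i,\,0,\,b_i)+\mathrm{diag}(r_i)$ (with $a_i=a(t,x_i)$ etc.), $q^{n}$ the vector containing the Dirichlet boundary contributions, $\varphi^{n}_j=\varphi(t_n,x_j)$, $f^n_j=f(t_n,x_j)$, $g^{n}=\varphi^{n}+f^{n}$. Let $u^n\in\mathbb{R}^J$ solve the BDF2 obstacle scheme $$\min\Big( (I_J + \tfrac{2}{3}\tau A)\, u^{n+1} - \tfrac{4}{3} u^n + \tfrac{1}{3} u^{n-1} + \tfrac{2}{3} \tau q^{n+1} - \tfrac{2}{3}\tau f^{n+1},\ u^{n+1}-g^{n+1}\Big) = 0,\quad n\geq 1,$$ and let $v^n\in\mathbb{R}^J$ (values $v(t_n,x_j)$ of some function $v$) solve the perturbed scheme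 $$\min\Big( (I_J + \tfrac{2\tau}{3} A) v^{n+1} - \tfrac{4}{3} v^n + \tfrac{1}{3} v^{n-1} + \tfrac{2\tau}{3} q^{n+1} - \tfrac{2\tau}{3} f^{n+1} - \tfrac{2\tau}{3} \bar\varepsilon^n,\ v^{n+1}- g^{n+1}\Big) = 0,\quad n\geq1,$$ for given perturbations (consistency errors) $\bar\varepsilon^n\in\mathbb{R}^J$. Let $e^n := v^n-u^n$, let $N(x):=\big(\sum_{j=1}^{J+1}|x_j-x_{j-1}|^2\big)^{1/2}$ for $x\in\mathbb{R}^J$ (with $x_0:=x_{J+1}:=0$), and let $\eta>0$, $\gamma\geq 0$ be constants such that $\langle e, Ae\rangle \geq \eta N(e/h)^2-\gamma\|e\|_2^2$ for all $e\in\mathbb{R}^J$ (such constants exist under the assumptions above). Then, for $\tau>0$ sufficiently small, there exist a constant $C_1$ independent of $n$ and a constant $\bar\gamma>0$ such that for all $t_n\leq T$ $$e^{-\bar\gamma t_n} \|e^{n+1}\|^2_2 + \tau\eta \sum_{k=1}^{n} e^{-\bar \gamma t_k} N(e^{k+1}/h)^2 \leq C_1\Big(\|e^0\|^2_2 + \|e^1\|^2_2 + \tau \sum_{k=1}^{n} e^{-\bar \gamma t_k} \|\bar\varepsilon^{k}\|^2_2\Big),$$ where $N(e^k/h)^2=\sum_{j=1}^{J+1} \big|\frac{e^k_j-e^k_{j-1}}{h}\big|^2$.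
   Context: Unconditional $L^2$ stability of the BDF2 obstacle scheme in the 1D setting: the matrix $A$ may in general depend on time but is written without time index. The proof uses the variational characterization $\min(Bx-c,x-g)=0 \iff x\geq g$ and $\langle Bx-c, w-x\rangle\geq 0$ for all $w\geq g$, and in it $\bar\gamma = 2+4\gamma$. *)

From HB Require Import structures.
From mathcomp Require Import all_boot all_order all_algebra.
From mathcomp Require Import all_classical all_reals all_analysis.
Set Implicit Arguments. Unset Strict Implicit. Unset Printing Implicit Defensive.
Import Order.TTheory GRing.Theory Num.Theory.
Local Open Scope ring_scope.

Section BDF2.
Variable R : realType.

Definition nrm2 (J : nat) (x : 'cV[R]_J) : R := \sum_(i < J) x i 0 ^+ 2.

Definition dotv (J : nat) (x y : 'cV[R]_J) : R := \sum_(i < J) x i 0 * y i 0.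

(* padding: padv x 0 = 0, padv x j = x_j (1 <= j <= J, stored at index j-1),
   padv x (J+1) = 0 *)
Definition padv (J : nat) (x : 'cV[R]_J) (k : nat) : R :=
  match k with
  | 0 => 0
  | k'.+1 => oapp (fun i : 'I_J => x i 0) 0 (insub k')
  end.

Definition Nsq (J : nat) (x : 'cV[R]_J) : R :=
  \sum_(0 <= j < J.+1) (padv x j.+1 - padv x j) ^+ 2.

(* mesh size and grid points x_j = Xmin + j h; row i : 'I_J is node j = i+1 *)
Definition meshh (Xmin Xmax : R) (J : nat) : R := (Xmax - Xmin) / (J.+1)%:R.
Definition xnode (Xmin Xmax : R) (J : nat) (j : nat) : R :=
  Xmin + j%:R * meshh Xmin Xmax J.

(* centered finite difference matrix at time t:
   A = 1/h^2 tridiag(-a_i, 2a_i, -a_i) + 1/(2h) tridiag(-b_i, 0, b_i) + diag(r_i) *)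
Definition FDmat (a b r : R -> R -> R) (Xmin Xmax : R) (J : nat) (t : R)
  : 'M[R]_J :=
  let h := meshh Xmin Xmax J in
  \matrix_(i < J, k < J)
    (let xi := xnode Xmin Xmax J i.+1 in
     if (k == i :> nat) then 2 * a t xi / h ^+ 2 + r t xi
     else if (k == i.+1 :> nat) then - a t xi / h ^+ 2 + b t xi / (2 * h)
     else if (k.+1 == i :> nat) then - a t xi / h ^+ 2 - b t xi / (2 * h)
     else 0).

Definition gridv (F : R -> R -> R) (Xmin Xmax : R) (J : nat) (t : R)
  : 'cV[R]_J := \col_(i < J) F t (xnode Xmin Xmax J i.+1).

End BDF2.

From HB Require Import structures.
From mathcomp Require Import all_boot all_order all_algebra.
From mathcomp Require Import all_classical all_reals all_analysis.
From mathcomp Require Import ring lra.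
Import Order.TTheory GRing.Theory Num.Theory.
Local Open Scope ring_scope.

(* The two schemes share the obstacle, so complementarity gives
   <res(v) - res(u), e^{n+1}> <= 0 for the error e = v - u.  Testing the BDF2
   step against e^{n+1} with the G-stability identity
     2<3a - 4b + c, a> = G(a, b) - G(b, c) + |a - 2b + c|^2,
     G(a, b) = |a|^2 + |2a - b|^2,
   and the coercivity of A gives
     (1 - tau (2 + 4 gamma)) G(e^{n+1}, e^n) + 4 tau eta N(e^{n+1}/h)^2
       <= G(e^n, e^{n-1}) + 2 tau |eps^n|^2.
   For gbar = 2 (2 + 4 gamma) and small tau, exp(-gbar tau) is below the
   damping factor, so the weights exp(-gbar t_k) make the sum telescope. *)

Lemma obstacle_complementarity_monotone (R : realDomainType) (p q x y g : R) :
  Num.min p (x - g) = 0 -> Num.min q (y - g) = 0 -> (p - q) * (x - y) <= 0.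
Proof.
have minP (s t : R) : Num.min s t = 0 -> [/\ 0 <= s, 0 <= t & s * t = 0].
  rewrite /Num.min; case: ltP => [st s0 | ts t0]; subst.
    by rewrite mul0r (ltW st) lexx.
  by rewrite mulr0 ts lexx.
move=> /minP[p0 xg pxg] /minP[q0 yg qyg].
have : 0 <= p * (y - g) + q * (x - g) by rewrite addr_ge0 ?mulr_ge0.
nra.
Qed.

Lemma expRN_bounds (R : realType) (x : R) :
  0 <= x <= 1 -> 1 - x <= expR (- x) <= 1 - x / 2.
Proof.
move=> /andP[x0 x1]; apply/andP; split; first exact: expR_ge1Dx.
have inv : expR (- x) * expR x = 1 by rewrite -expRD addNr expR0.
have := ler_wpM2l (expR_ge0 (- x)) (expR_ge1Dx x).
rewrite inv; nra.
Qed.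

Lemma grid_time_bounds (R : realFieldType) (T : R) (N k : nat) :
  0 < T -> (0 < N)%N -> (k <= N)%N -> 0 <= k%:R * (T / N%:R) <= T.
Proof.
move=> T0 N0 kN; have N0' : 0 < N%:R :> R by rewrite ltr0n.
apply/andP; split; first by rewrite mulr_ge0 // divr_ge0 // ltW.
have -> : k%:R * (T / N%:R) = T * (k%:R / N%:R) by field; lra.
by rewrite ger_pMr // ler_pdivrMr // mul1r ler_nat.
Qed.

Lemma weighted_telescoping (R : realDomainType) (E D S W : nat -> R) (alpha : R)
    (m : nat) :
  (forall k, W k.+1 = W k * alpha) -> (forall k, 0 <= W k) ->
  (forall k, (1 <= k <= m)%N -> alpha * E k.+1 + D k <= E k + S k) ->
  W m.+1 * E m.+1 + \sum_(1 <= k < m.+1) W k * D k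
    <= W 1%N * E 1%N + \sum_(1 <= k < m.+1) W k * S k.
Proof.
move=> Wstep W0; elim: m => [|m IH] step; first by rewrite !big_geq.
rewrite !(big_nat_recr m.+1) //= Wstep.
have /IH IHm : forall k, (1 <= k <= m)%N -> alpha * E k.+1 + D k <= E k + S k.
  by move=> k /andP[k1 km]; apply: step; rewrite k1 leqW.
have := ler_wpM2l (W0 m.+1) (step m.+1 _); rewrite leqnn => /(_ isT).
move: IHm; set s1 := \sum_(1 <= k < m.+1) _; set s2 := \sum_(1 <= k < m.+1) _.
nra.
Qed.

Section BDF2Energy.
Context {R : realType} {J : nat}.
Implicit Types (a b c x y eps : 'cV[R]_J) (A : 'M[R]_J).

Lemma nrm2_ge0 x : 0 <= nrm2 x.
Proof. by apply: sumr_ge0 => i _; apply: sqr_ge0. Qed.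

Lemma Nsq_ge0 x : 0 <= Nsq x.
Proof. by apply: sumr_ge0 => i _; apply: sqr_ge0. Qed.

Lemma dotv_le_nrm2 x y : 2 * dotv x y <= nrm2 x + nrm2 y.
Proof.
rewrite /dotv /nrm2 mulr_sumr -big_split /=; apply: ler_sum => i _.
by have := sqr_ge0 (x i 0 - y i 0); lra.
Qed.

Definition bdf2_energy x y := nrm2 x + nrm2 (2 *: x - y).

Lemma nrm2_le_bdf2_energy x y : nrm2 x <= bdf2_energy x y.
Proof. by rewrite lerDl nrm2_ge0. Qed.

Lemma bdf2_energy_ge0 x y : 0 <= bdf2_energy x y.
Proof. exact: le_trans (nrm2_ge0 x) (nrm2_le_bdf2_energy x y). Qed.

Lemma bdf2_energy_le x y : bdf2_energy x y <= 9 * nrm2 x + 2 * nrm2 y.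
Proof.
rewrite /bdf2_energy /nrm2 !mulr_sumr -!big_split /=; apply: ler_sum => i _.
by rewrite !mxE; have := sqr_ge0 (2 * x i 0 + y i 0); lra.
Qed.

Lemma bdf2_energy_identity a b c :
  2 * dotv (3 *: a - 4 *: b + c) a
    = bdf2_energy a b - bdf2_energy b c + nrm2 (a - 2 *: b + c).
Proof.
rewrite /bdf2_energy /dotv /nrm2 mulr_sumr -!big_split -!sumrB -!big_split /=.
by apply: eq_bigr => i _; rewrite !mxE; ring.
Qed.

Lemma bdf2_residual_dotv A a b c eps (tau : R) :
  dotv (a + (2/3 * tau) *: (A *m a) - (4/3) *: b + (1/3) *: c
        - (2/3 * tau) *: eps) a
    = dotv (3 *: a - 4 *: b + c) a / 3
      + 2/3 * tau * (dotv a (A *m a) - dotv eps a).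
Proof.
rewrite /dotv mulr_suml -sumrB mulr_sumr -big_split /=.
by apply: eq_bigr => i _; rewrite !mxE; field.
Qed.

Lemma bdf2_energy_step A a b c eps (tau eta gam alpha Ns : R) :
  0 <= tau -> 0 <= gam -> alpha <= 1 - tau * (2 + 4 * gam) ->
  dotv (a + (2/3 * tau) *: (A *m a) - (4/3) *: b + (1/3) *: c
        - (2/3 * tau) *: eps) a <= 0 ->
  eta * Ns - gam * nrm2 a <= dotv a (A *m a) ->
  alpha * bdf2_energy a b + 4 * tau * eta * Ns
    <= bdf2_energy b c + 2 * tau * nrm2 eps.
Proof.
move=> tau0 gam0 alpha_le; rewrite bdf2_residual_dotv => dissip coerc.
have G := bdf2_energy_identity a b c.
have curv := nrm2_ge0 (a - 2 *: b + c).
have young := ler_wpM2l tau0 (dotv_le_nrm2 eps a).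
have coerc_tau := ler_wpM2l tau0 coerc.
have absorb := ler_wpM2r (bdf2_energy_ge0 a b) alpha_le.
have gam_a := ler_wpM2l (mulr_ge0 tau0 gam0) (nrm2_le_bdf2_energy a b).
have a_E := ler_wpM2l tau0 (nrm2_le_bdf2_energy a b).
lra.
Qed.

Lemma obstacle_dotv_monotone (P Q x y g : 'cV[R]_J) :
  (forall i, Num.min (P i 0) ((x - g) i 0) = 0) ->
  (forall i, Num.min (Q i 0) ((y - g) i 0) = 0) ->
  dotv (P - Q) (x - y) <= 0.
Proof.
move=> HP HQ; apply: sumr_le0 => i _.
by move: (HP i) (HQ i); rewrite !mxE; apply: obstacle_complementarity_monotone.
Qed.

Lemma bdf2_residual_sub A (s : R) (v1 v0 vm u1 u0 um q F eps : 'cV[R]_J) :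
  ((1%:M + s *: A) *m v1 - (4/3) *: v0 + (1/3) *: vm + s *: q - s *: F
     - s *: eps)
  - ((1%:M + s *: A) *m u1 - (4/3) *: u0 + (1/3) *: um + s *: q - s *: F)
  = (v1 - u1) + s *: (A *m (v1 - u1)) - (4/3) *: (v0 - u0)
    + (1/3) *: (vm - um) - s *: eps.
Proof.
rewrite !mulmxDl !mul1mx -!scalemxAl mulmxBr.
move: (A *m v1) (A *m u1) => Av Au.
by apply/matrixP => i j; rewrite !mxE; ring.
Qed.

Lemma bdf2_obstacle_dissipation A (s : R) (v1 v0 vm u1 u0 um q F G eps : 'cV[R]_J) :
  (forall i, Num.min
     (((1%:M + s *: A) *m u1 - (4/3) *: u0 + (1/3) *: um + s *: q - s *: F) i 0)
     ((u1 - G) i 0) = 0) ->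
  (forall i, Num.min
     (((1%:M + s *: A) *m v1 - (4/3) *: v0 + (1/3) *: vm + s *: q - s *: F
       - s *: eps) i 0)
     ((v1 - G) i 0) = 0) ->
  dotv ((v1 - u1) + s *: (A *m (v1 - u1)) - (4/3) *: (v0 - u0)
        + (1/3) *: (vm - um) - s *: eps) (v1 - u1) <= 0.
Proof.
by move=> Hu Hv; rewrite -(bdf2_residual_sub _ _ _ _ _ _ _ _ q F);
  apply: obstacle_dotv_monotone Hv Hu.
Qed.

Definition bdf2_weight (gbar tau : R) (k : nat) : R := expR (- gbar * (k%:R * tau)).

Lemma bdf2_weightS gbar tau k :
  bdf2_weight gbar tau k.+1 = bdf2_weight gbar tau k * expR (- gbar * tau).
Proof. by rewrite /bdf2_weight -expRD -addn1 natrD; congr expR; ring. Qed.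

Lemma bdf2_weight1 gbar tau : bdf2_weight gbar tau 1 = expR (- gbar * tau).
Proof. by rewrite /bdf2_weight mul1r. Qed.

Section WeightedEstimate.
Variables (A : nat -> 'M[R]_J) (e eps : nat -> 'cV[R]_J).
Variables (h tau eta gam gb : R) (m : nat).
Hypotheses (tau_gt0 : 0 < tau) (eta_gt0 : 0 < eta) (gam_ge0 : 0 <= gam).
Hypotheses (gb_ge : 2 + 4 * gam <= gb) (tau_gb_small : tau * gb <= 1/4).
Hypothesis dissipative : forall k, (1 <= k <= m)%N ->
  dotv (e k.+1 + (2/3 * tau) *: (A k.+1 *m e k.+1) - (4/3) *: e k
        + (1/3) *: e k.-1 - (2/3 * tau) *: eps k) (e k.+1) <= 0.
Hypothesis coercive : forall k, (1 <= k <= m)%N ->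
  eta * Nsq (h^-1 *: e k.+1) - gam * nrm2 (e k.+1)
    <= dotv (e k.+1) (A k.+1 *m e k.+1).

Local Notation W := (bdf2_weight (2 * gb) tau).
Local Notation alpha := (expR (- (2 * gb) * tau)).

Lemma tau_gb_ge0 : 0 <= tau * gb.
Proof.
apply: mulr_ge0; first exact: ltW.
by apply: le_trans gb_ge; rewrite addr_ge0 ?mulr_ge0.
Qed.

Lemma bdf2_damping_bounds : 1/2 <= alpha <= 1 - tau * gb.
Proof.
have tgb := tau_gb_ge0.
have /andP[lo hi] : 1 - 2 * gb * tau <= expR (- (2 * gb * tau)) <= 1 - 2 * gb * tau / 2.
  by apply: expRN_bounds; apply/andP; split; move: tau_gb_small; lra.
by rewrite mulNr; apply/andP; split; move: tau_gb_small; lra.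
Qed.

Lemma bdf2_energy_telescoped :
  W m.+1 * bdf2_energy (e m.+1) (e m)
    + 4 * tau * eta * \sum_(1 <= k < m.+1) W k * Nsq (h^-1 *: e k.+1)
  <= W 1%N * bdf2_energy (e 1%N) (e 0%N)
    + 2 * tau * \sum_(1 <= k < m.+1) W k * nrm2 (eps k).
Proof.
have /andP[_ alpha_le] := bdf2_damping_bounds.
have step k : (1 <= k <= m)%N -> alpha * bdf2_energy (e k.+1) (e k)
    + 4 * tau * eta * Nsq (h^-1 *: e k.+1)
    <= bdf2_energy (e k) (e k.-1) + 2 * tau * nrm2 (eps k).
  move=> km; apply: bdf2_energy_step (dissipative k km) (coercive k km) => //.
    exact: ltW.
  by have := ler_wpM2l (ltW tau_gt0) gb_ge; lra.
have pull (c : R) (F : nat -> R) :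
    \sum_(1 <= k < m.+1) W k * (c * F k) = c * \sum_(1 <= k < m.+1) W k * F k.
  by rewrite mulr_sumr; apply: eq_bigr => k _; rewrite mulrCA.
rewrite -!pull.
exact: (weighted_telescoping _ (fun k => bdf2_energy (e k) (e k.-1))
  _ _ _ _ _ (bdf2_weightS _ _) (fun k => expR_ge0 _) step).
Qed.

Lemma bdf2_weighted_estimate :
  W m * nrm2 (e m.+1) + tau * eta * \sum_(1 <= k < m.+1) W k * Nsq (h^-1 *: e k.+1)
  <= 18 * (nrm2 (e 0%N) + nrm2 (e 1%N)
           + tau * \sum_(1 <= k < m.+1) W k * nrm2 (eps k)).
Proof.
have /andP[alpha_ge alpha_le] := bdf2_damping_bounds.
have := bdf2_energy_telescoped; rewrite bdf2_weightS bdf2_weight1.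
set SN := \sum_(1 <= k < m.+1) _; set Se := \sum_(1 <= k < m.+1) _.
have SN0 : 0 <= SN by rewrite sumr_ge0 // => k _; rewrite mulr_ge0 ?expR_ge0 ?Nsq_ge0.
have Se0 : 0 <= Se by rewrite sumr_ge0 // => k _; rewrite mulr_ge0 ?expR_ge0 ?nrm2_ge0.
have Wm0 : 0 <= W m := expR_ge0 _.
have Em := ler_wpM2l Wm0 (nrm2_le_bdf2_energy (e m.+1) (e m)).
have Wm_half := ler_wpM2r (mulr_ge0 Wm0 (bdf2_energy_ge0 (e m.+1) (e m))) alpha_ge.
have alpha_le1 : alpha <= 1 by have := tau_gb_ge0; lra.
have alpha_E1 := ler_wpM2r (bdf2_energy_ge0 (e 1%N) (e 0%N)) alpha_le1.
have E1 := bdf2_energy_le (e 1%N) (e 0%N).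
have := mulr_ge0 (mulr_ge0 (ltW tau_gt0) (ltW eta_gt0)) SN0.
have := mulr_ge0 (ltW tau_gt0) Se0.
have := nrm2_ge0 (e 0%N); have := nrm2_ge0 (e 1%N).
lra.
Qed.

End WeightedEstimate.

End BDF2Energy.

Theorem proposition4p7 (R : realType) (T Xmin Xmax : R) (J : nat)
  (a b r phi f : R -> R -> R) (eta gam : R) :
  0 < T -> Xmin < Xmax -> (0 < J)%N ->
  (* a, b, r bounded on the domain *)
  (exists M : R, forall t x, 0 < t < T -> Xmin < x < Xmax ->
      `|a t x| <= M /\ `|b t x| <= M /\ `|r t x| <= M) ->
  (* uniform ellipticity *)
  (exists eta0 : R, 0 < eta0 /\
      forall t x, 0 < t < T -> Xmin < x < Xmax -> eta0 <= a t x) ->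
  (* a Lipschitz in x uniformly in t *)
  (exists L : R, forall t x y, 0 < t < T -> Xmin < x < Xmax -> Xmin < y < Xmax ->
      `|a t x - a t y| <= L * `|x - y|) ->
  (* coercivity constants eta > 0, gamma >= 0 *)
  0 < eta -> 0 <= gam ->
  (forall t, 0 <= t <= T -> forall e : 'cV[R]_J,
      dotv e (FDmat a b r Xmin Xmax J t *m e)
        >= eta * Nsq ((meshh Xmin Xmax J)^-1 *: e) - gam * nrm2 e) ->
  exists tau0 : R, 0 < tau0 /\
  exists C1 gbar : R, 0 < gbar /\
  forall N : nat, (0 < N)%N -> T / N%:R <= tau0 ->
  let tau := T / N%:R in
  let tn := fun n : nat => n%:R * tau in
  let A := fun n : nat => FDmat a b r Xmin Xmax J (tn n) in
  let F := fun n : nat => gridv f Xmin Xmax J (tn n) in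
  let G := fun n : nat => gridv (fun t x => phi t x + f t x) Xmin Xmax J (tn n) in
  forall (u v epsb q : nat -> 'cV[R]_J),
  (* BDF2 obstacle scheme for u *)
  (forall n, (1 <= n)%N -> (n.+1 <= N)%N -> forall i : 'I_J,
     Num.min
       (((1%:M + (2 / 3 * tau) *: A n.+1) *m u n.+1 - (4 / 3) *: u n
          + (1 / 3) *: u n.-1 + (2 / 3 * tau) *: q n.+1
          - (2 / 3 * tau) *: F n.+1) i 0)
       ((u n.+1 - G n.+1) i 0) = 0) ->
  (* perturbed scheme for v *)
  (forall n, (1 <= n)%N -> (n.+1 <= N)%N -> forall i : 'I_J,
     Num.min
       (((1%:M + (2 / 3 * tau) *: A n.+1) *m v n.+1 - (4 / 3) *: v n
          + (1 / 3) *: v n.-1 + (2 / 3 * tau) *: q n.+1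
          - (2 / 3 * tau) *: F n.+1 - (2 / 3 * tau) *: epsb n) i 0)
       ((v n.+1 - G n.+1) i 0) = 0) ->
  let e := fun n : nat => v n - u n in
  forall n : nat, (n.+1 <= N)%N ->
    expR (- gbar * tn n) * nrm2 (e n.+1)
      + tau * eta * \sum_(1 <= k < n.+1)
          expR (- gbar * tn k) * Nsq ((meshh Xmin Xmax J)^-1 *: e k.+1)
    <= C1 * (nrm2 (e 0%N) + nrm2 (e 1%N)
             + tau * \sum_(1 <= k < n.+1) expR (- gbar * tn k) * nrm2 (epsb k)).
Proof.
move=> T0 _ _ _ _ _ eta0 gam0 coercive.
pose gb := 2 + 4 * gam; have gb0 : 0 < gb by rewrite /gb; lra.
exists (4 * gb)^-1; split; first by rewrite invr_gt0 mulr_gt0.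
exists 18, (2 * gb); split; first by rewrite mulr_gt0.
move=> N N0 small tau tn A F G u v epsb q Hu Hv e n nN.
have tau0 : 0 < tau by rewrite divr_gt0 // ltr0n.
apply: (bdf2_weighted_estimate A e epsb _ tau eta gam gb n) => //.
- have := ler_wpM2r (ltW gb0) small.
  by have -> : (4 * gb)^-1 * gb = 1/4 by field; lra.
- move=> k /andP[k1 kn].
  apply: bdf2_obstacle_dissipation (Hu k k1 _) (Hv k k1 _); exact: leq_ltn_trans kn nN.
- move=> k /andP[_ kn]; apply: coercive.
  exact: grid_time_bounds (leq_ltn_trans kn nN).
Qed.
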